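(* Let $G$ be a connected bipartite graph with at least two vertices, $v\in V(G)$, and let $c_0$ be the mill-pond configuration $MP(v)$ ($c_0(v)=1$, $c_0(x)=0$ for $x\neq v$). Then the configurations of the diffusion process become periodic with period length $2$ after a pre-period of length $\epsilon(v)-1$.
   Context: Diffusion process: for a finite simple graph $G$ and a chip configuration $c_t:V(G)\to\mathbb{Z}$ (negative values allowed), the next configuration is defined simultaneously for every vertex $u$ by $c_{t+1}(u)=c_t(u)-|\{w\in N(u): c_t(u)>c_t(w)\}|+|\{w\in N(u): c_t(u)<c_t(w)\}|$. $\epsilon(v)=\max_{w\in V(G)}d(v,w)$ is the eccentricity of $v$. The period length is the least $p\geq1$ with $c_{t+p}=c_t$ for some $t$, and the pre-period length is the least such $t$ for that $p$. *)

From mathcomp Require Import all_boot all_order all_algebra.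
Set Implicit Arguments. Unset Strict Implicit. Unset Printing Implicit Defensive.
Import Order.TTheory GRing.Theory Num.Theory.
Local Open Scope ring_scope.

Definition simple_graph (T : finType) (e : rel T) : Prop :=
  symmetric e /\ irreflexive e.

Definition connected_graph (T : finType) (e : rel T) : Prop :=
  forall x y : T, connect e x y.

Definition bipartite (T : finType) (e : rel T) : Prop :=
  exists f : T -> bool, forall x y, e x y -> f x != f y.

Definition walk_of_length (T : finType) (e : rel T) (k : nat) (v w : T) : bool :=
  [exists p : k.-tuple T, path e v p && (last v p == w)].

(* graph distance d(v,w): length of a shortest walk (searched among 0..|V|-1,
   which is exact for connected graphs) *)
Definition dist (T : finType) (e : rel T) (v w : T) : nat :=
  find (fun k => walk_of_length e k v w) (iota 0 #|T|).

Definition ecc (T : finType) (e : rel T) (v : T) : nat :=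
  \max_(w : T) dist e v w.

Definition config (T : finType) := {ffun T -> int}.

Definition diffuse (T : finType) (e : rel T) (c : config T) : config T :=
  [ffun u => c u - (#|[set w | e u w && (c w < c u)]|)%:Z
                 + (#|[set w | e u w && (c u < c w)]|)%:Z].

Definition diffusion (T : finType) (e : rel T) (c0 : config T) (t : nat) : config T :=
  iter t (diffuse e) c0.

Definition millpond (T : finType) (v : T) : config T :=
  [ffun x => if x == v then 1%R else 0%R].

Definition is_period_length (X : Type) (c : nat -> X) (p : nat) : Prop :=
  (1 <= p)%N /\ (exists t, c (t + p)%N = c t) /\
  (forall q, (1 <= q)%N -> (q < p)%N -> forall t, c (t + q)%N <> c t).

Definition is_preperiod_length (X : Type) (c : nat -> X) (p t : nat) : Prop :=
  c (t + p)%N = c t /\ (forall s, (s < t)%N -> c (s + p)%N <> c s).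

From mathcomp Require Import all_boot all_order all_algebra.
From mathcomp Require Import zify.
Set Implicit Arguments. Unset Strict Implicit. Unset Printing Implicit Defensive.
Import Order.TTheory GRing.Theory.

(* Write d for the distance from v; bipartiteness gives neighbours distances of
   opposite parity.  By induction on t, after t steps the chips lie in the ball of
   radius t, and inside it a vertex x with t + d x even is a strict local maximum
   holding between 1 and deg x chips, while one with t + d x odd is a strict local
   minimum holding between 1 - deg x and 0.  Hence inner vertices alternate by
   deg x, and a vertex entering the ball at distance t + 1 gets one chip per
   neighbour at distance t.  From t = ecc v - 1 on, the ball covers the graph and a
   vertex at distance ecc v has all its neighbours at distance ecc v - 1, so it
   gains deg x and loses it again: the period is 2.  It is not 1 since the value at
   v changes sign at every step, and the pre-period is not shorter since a vertex
   at distance s + 2 is empty at time s but not at time s + 2. *)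

Section Walks.

Variables (T : finType) (e : rel T).

Lemma walk_of_lengthP k v w :
  reflect (exists p : seq T, [/\ size p = k, path e v p & last v p = w])
          (walk_of_length e k v w).
Proof.
apply: (iffP existsP) => [[p /andP[P /eqP L]] | [p [S P L]]].
  by exists (val p); rewrite size_tuple.
have Sb : size p == k by apply/eqP.
by exists (Tuple Sb); rewrite /= P L eqxx.
Qed.

Lemma walk_of_length0 v w : walk_of_length e 0 v w -> w = v.
Proof. by case/walk_of_lengthP => -[|a p] [//= _ _ <-]. Qed.

Lemma walk_of_lengthS k v x y :
  walk_of_length e k v x -> e x y -> walk_of_length e k.+1 v y.
Proof.
case/walk_of_lengthP => p [S P L] exy; apply/walk_of_lengthP; exists (rcons p y).
by rewrite size_rcons rcons_path last_rcons S P L exy.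
Qed.

Lemma walk_of_lengthS_inv k v y :
  walk_of_length e k.+1 v y -> exists2 x, walk_of_length e k v x & e x y.
Proof.
case/walk_of_lengthP => p [S P L]; case/lastP: p S P L => [//|p z].
rewrite size_rcons rcons_path last_rcons => -[S] /andP[P exz] <-.
by exists (last v p) => //; apply/walk_of_lengthP; exists p.
Qed.

Lemma walk_of_length_parity (f : T -> bool) k v x :
  (forall a b, e a b -> f a != f b) ->
  walk_of_length e k v x -> f x = f v (+) odd k.
Proof.
move=> hf; elim: k x => [|k IH] x; first by move/walk_of_length0 => ->; rewrite addbF.
case/walk_of_lengthS_inv => y /IH fy /hf; rewrite fy /=.
by case: (f x); case: (f v); case: (odd k).
Qed.

Lemma connect_walk_of_length v x :
  connect e v x -> exists2 k, (k < #|T|)%N & walk_of_length e k v x.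
Proof.
case/connectP => p P L; case/shortenP: P L => q Q U _ ->.
exists (size q); last by apply/walk_of_lengthP; exists q.
by have := max_card (mem (v :: q)); rewrite (card_uniqP U).
Qed.

End Walks.

Section Distance.

Variables (T : finType) (e : rel T) (v : T).

Lemma dist_le_ecc x : (dist e v x <= ecc e v)%N.
Proof. exact: bigop.leq_bigmax. Qed.

Lemma ecc_attained : exists x, dist e v x = ecc e v.
Proof.
have [|x Ex] := @bigop.eq_bigmax _ (dist e v); last by exists x; rewrite /ecc Ex.
by apply/card_gt0P; exists v.
Qed.

Hypothesis conn : connected_graph e.

Let has_walk x : has (fun k => walk_of_length e k v x) (iota 0 #|T|).
Proof.
have [k lk wk] := connect_walk_of_length (conn v x).
by apply/hasP; exists k => //; rewrite mem_iota.
Qed.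

Lemma dist_walk x : walk_of_length e (dist e v x) v x.
Proof.
have := nth_find 0 (has_walk x); rewrite nth_iota //.
by have := has_walk x; rewrite has_find size_iota.
Qed.

Lemma dist_minimal x k : walk_of_length e k v x -> (dist e v x <= k)%N.
Proof.
move=> wk; rewrite leqNgt; apply/negP => lkd.
have lt := has_walk x; rewrite has_find size_iota in lt.
by have := before_find 0 lkd; rewrite nth_iota ?add0n ?wk //; apply: ltn_trans lt.
Qed.

Lemma dist_eq0 x : (dist e v x == 0%N) = (x == v).
Proof.
apply/eqP/eqP => [d0|->]; first by have := dist_walk x; rewrite d0 => /walk_of_length0.
by apply/eqP; rewrite -leqn0; apply: dist_minimal; apply/walk_of_lengthP; exists [::].
Qed.

Lemma dist_refl : dist e v v = 0%N.
Proof. by apply/eqP; rewrite dist_eq0. Qed.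

Lemma dist_edge x y : e x y -> (dist e v y <= (dist e v x).+1)%N.
Proof. by move=> exy; apply/dist_minimal/(walk_of_lengthS (dist_walk x)). Qed.

Lemma dist_pred x k : dist e v x = k.+1 -> exists2 y, e y x & dist e v y = k.
Proof.
move=> dx; have := dist_walk x; rewrite dx => /walk_of_lengthS_inv [y wy eyx].
exists y => //; have := dist_minimal wy; have := dist_edge eyx; rewrite dx; lia.
Qed.

Lemma dist_between x j : (j <= dist e v x)%N -> exists y, dist e v y = j.
Proof.
move=> ljd; have dx : dist e v x = (dist e v x - j + j)%N by rewrite subnK.
move: (dist e v x - j)%N dx => k; elim: k x {ljd} => [|k IH] x dx; first by exists x.
by have [y _ /IH] := dist_pred dx.
Qed.

Lemma dist_edge_odd x y : bipartite e -> e x y ->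
  odd (dist e v y) = ~~ odd (dist e v x).
Proof.
case=> f hf exy; have := hf _ _ exy.
rewrite (walk_of_length_parity hf (dist_walk x)) (walk_of_length_parity hf (dist_walk y)).
by case: (f v); case: (odd (dist e v x)); case: (odd (dist e v y)).
Qed.

Lemma ecc_gt0 : (1 < #|T|)%N -> (0 < ecc e v)%N.
Proof.
move=> hT; have /card_gt0P [x] : (0 < #|predC1 v|)%N by rewrite cardC1; lia.
rewrite !inE -dist_eq0 -lt0n => dx.
exact: leq_trans dx (dist_le_ecc x).
Qed.

End Distance.

Local Open Scope ring_scope.

Section Diffusion.

Variables (T : finType) (e : rel T).

Definition deg (x : T) : nat := #|[set w | e x w]|.

Lemma card_nbrs_all (P : pred T) x :
  (forall w, e x w -> P w) -> #|[set w | e x w && P w]| = deg x.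
Proof.
by move=> hP; apply: eq_card => w; rewrite !inE; case exw: (e x w) => //=; apply: hP.
Qed.

Lemma card_nbrs_none (P : pred T) x :
  (forall w, e x w -> ~~ P w) -> #|[set w | e x w && P w]| = 0%N.
Proof.
move=> hP; apply: eq_card0 => w; rewrite !inE.
by case exw: (e x w) => //=; apply/negbTE/hP.
Qed.

Lemma diffuse_nbrs_ge (c : config T) x : (forall w, e x w -> c x <= c w) ->
  diffuse e c x = c x + (#|[set w | e x w && (c x < c w)]|)%:Z.
Proof.
move=> hc; rewrite ffunE card_nbrs_none ?subr0 // => w /hc.
by rewrite ltNge => ->.
Qed.

Lemma diffuse_nbrs_le (c : config T) x : (forall w, e x w -> c w <= c x) ->
  diffuse e c x = c x - (#|[set w | e x w && (c w < c x)]|)%:Z.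
Proof.
move=> hc; rewrite ffunE [X in _ + X%:Z]card_nbrs_none ?addr0 // => w /hc.
by rewrite ltNge => ->.
Qed.

Lemma diffuse_local_min (c : config T) x : (forall w, e x w -> c x < c w) ->
  diffuse e c x = c x + (deg x)%:Z.
Proof.
move=> hc; rewrite diffuse_nbrs_ge => [|w /hc /ltW //].
by rewrite card_nbrs_all.
Qed.

Lemma diffuse_local_max (c : config T) x : (forall w, e x w -> c w < c x) ->
  diffuse e c x = c x - (deg x)%:Z.
Proof.
move=> hc; rewrite diffuse_nbrs_le => [|w /hc /ltW //].
by rewrite card_nbrs_all.
Qed.

End Diffusion.

Section MillPond.

Variables (T : finType) (e : rel T) (v : T).
Hypotheses (simple : simple_graph e) (conn : connected_graph e) (bip : bipartite e).

Local Notation d := (dist e v).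

Lemma dist_adj x w : e x w ->
  [/\ odd (d w) = ~~ odd (d x), (d w <= (d x).+1)%N & (d x <= (d w).+1)%N].
Proof.
move=> exw; have [sym _] := simple.
by split; [exact: dist_edge_odd | exact: dist_edge | apply: dist_edge; rewrite // sym].
Qed.

Definition ripple (t : nat) (c : config T) : Prop :=
  forall x, if (d x <= t)%N then
    if odd (t + d x) then 1 - (deg e x)%:Z <= c x <= 0 else 1 <= c x <= (deg e x)%:Z
  else c x == 0.

Lemma ripple_diffuse_in t c x : ripple t c -> (d x <= t)%N ->
  diffuse e c x = if odd (t + d x) then c x + (deg e x)%:Z else c x - (deg e x)%:Z.
Proof.
move=> rc dxt; have cx := rc x; rewrite dxt in cx.
have par w : e x w -> odd (t + d w) = ~~ odd (t + d x).
  by case/dist_adj => o _ _; rewrite !oddD o addbN.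
case ho: (odd (t + d x)); rewrite ho in cx.
  have ltdx : (d x < t)%N.
    by rewrite ltn_neqAle dxt andbT; apply: contraTneq ho => ->; rewrite oddD addbb.
  apply: diffuse_local_min => w exw; have [_ dw _] := dist_adj exw.
  have := rc w; rewrite ifT; last by lia.
  by rewrite par // ho /=; move: cx; lia.
apply: diffuse_local_max => w exw.
have := rc w; case: leqP => _; last by move/eqP->; move: cx; lia.
by rewrite par // ho /=; move: cx; lia.
Qed.

Lemma ripple_diffuse_out t c x : ripple t c -> (t < d x)%N ->
  diffuse e c x = (#|[set w | e x w && (d w <= t)%N]|)%:Z.
Proof.
move=> rc ltdx; have cx : c x = 0 by have := rc x; rewrite leqNgt ltdx => /eqP.
have cw w : e x w -> if (d w <= t)%N then 1 <= c w else c w == 0.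
  move=> exw; have := rc w; case: leqP => // dwt.
  have [_ _ dxw] := dist_adj exw; have -> : d w = t by lia.
  by rewrite oddD addbb /= => /andP[].
rewrite diffuse_nbrs_ge cx ?add0r => [|w /cw]; last by case: leqP => _; [lia | move/eqP->].
congr Posz; apply: eq_card => w; rewrite !inE; case exw: (e x w) => //=.
by have := cw w exw; case: leqP => _; [lia | move/eqP->].
Qed.

Lemma ripple_diffuse t c : ripple t c -> ripple t.+1 (diffuse e c).
Proof.
move=> rc x; case: (leqP (d x) t) => [dxt | ltdx].
  have := rc x; rewrite dxt (ripple_diffuse_in rc dxt) (leqW dxt) addSn /=.
  by case: odd => /=; lia.
rewrite (ripple_diffuse_out rc ltdx); case: leqP => [dxt1 | lt1]; last first.
  by rewrite card_nbrs_none // => w /dist_adj [_ _]; lia.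
have dxE : d x = t.+1 by lia.
rewrite dxE addSn addnS /= oddD addbb /=.
have [y eyx dy] := dist_pred conn dxE.
have pos : (0 < #|[set w | e x w && (d w <= t)%N]|)%N.
  apply/card_gt0P; exists y; rewrite inE dy leqnn andbT.
  by case: simple => sym _; rewrite sym.
have le : (#|[set w | e x w && (d w <= t)%N]| <= deg e x)%N.
  by apply/subset_leq_card/subsetP => w; rewrite !inE => /andP[].
lia.
Qed.

Hypothesis nontrivial : (1 < #|T|)%N.

Lemma deg_gt0 : (0 < deg e v)%N.
Proof.
have [x dx] := ecc_attained e v.
have [|y dy] := @dist_between _ _ v conn x 1; first by rewrite dx ecc_gt0.
have [z ezy /eqP] := dist_pred conn dy; rewrite dist_eq0 // => /eqP zv.
by apply/card_gt0P; exists y; rewrite inE -zv.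
Qed.

Lemma ripple_millpond : ripple 0 (millpond v).
Proof.
move=> x; rewrite ffunE leqn0 dist_eq0 //.
by case: eqVneq => [->|] //=; rewrite dist_refl //=; have := deg_gt0; lia.
Qed.

Local Notation c := (diffusion e (millpond v)).

Lemma ripple_diffusion t : ripple t (c t).
Proof. by elim: t => [|t IH]; [exact: ripple_millpond | exact: ripple_diffuse]. Qed.

Lemma diffusion_period2 t : (ecc e v <= t.+1)%N -> c t.+2 = c t.
Proof.
move=> et; have r0 := ripple_diffusion t; have r1 := ripple_diffusion t.+1.
apply/ffunP => x; change (diffuse e (c t.+1) x = c t x).
have := r0 x; case: (leqP (d x) t) => [dxt | ltdx] cx.
  rewrite (ripple_diffuse_in r1) ?(leqW dxt) // (ripple_diffuse_in r0 dxt) addSn /=.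
  by case: odd cx => /=; lia.
have dxE : d x = t.+1 by have := dist_le_ecc e v x; lia.
rewrite (ripple_diffuse_in r1) ?dxE // oddD addbb /= (ripple_diffuse_out r0) ?dxE //.
rewrite card_nbrs_all ?(eqP cx) ?subrr // => w exw.
have [o _ _] := dist_adj exw; have := dist_le_ecc e v w.
suff : d w != t.+1 by lia.
by apply/eqP => dwE; move: o; rewrite dwE dxE; case: odd.
Qed.

Lemma diffusion_step_neq t : c t.+1 <> c t.
Proof.
move/ffunP/(_ v); have := ripple_diffusion t v; have := ripple_diffusion t.+1 v.
by rewrite dist_refl // !leq0n !addn0 /=; case: odd => /=; lia.
Qed.

Lemma diffusion_neq_before_ecc s : (s.+2 <= ecc e v)%N -> c s.+2 <> c s.
Proof.
move=> se; have [x0 dx0] := ecc_attained e v.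
have [|x dx] := @dist_between _ _ v conn x0 s.+2; first by rewrite dx0.
move/ffunP/(_ x); have := ripple_diffusion s x; have := ripple_diffusion s.+2 x.
rewrite dx leqnn oddD addbb (_ : (s.+2 <= s)%N = false) /=; last by lia.
lia.
Qed.

End MillPond.

Theorem corollary21 (T : finType) (e : rel T) (v : T) :
  simple_graph e -> connected_graph e -> bipartite e -> (1 < #|T|)%N ->
  is_period_length (diffusion e (millpond v)) 2 /\
  is_preperiod_length (diffusion e (millpond v)) 2 (ecc e v).-1.
Proof.
move=> simple conn bip hT; have ecc_pos := ecc_gt0 v conn hT.
have periodic : diffusion e (millpond v) ((ecc e v).-1 + 2) =
                diffusion e (millpond v) (ecc e v).-1.
  by rewrite addn2; apply: diffusion_period2 => //; lia.
split.
  split=> //; split; first by exists (ecc e v).-1.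
  move=> q q_gt0 q_lt2 t; have -> : q = 1%N by lia.
  by rewrite addn1; apply: diffusion_step_neq.
split=> // s s_lt; rewrite addn2; apply: diffusion_neq_before_ecc => //; lia.
Qed.
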